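(* Let $(G_k)_{k\in\mathbb Z}$ be a gibonacci sequence and let $F_k$ denote the Fibonacci numbers. For every positive integer $n$ and all integers $m$, $s$ and $t$, \begin{equation*} 5\sum_{j = 1}^n (-F_{m - 5})^{n - j} F_m^{j - 1} G_{5(j + t) + m + s} = F_m^n G_{5(n + t + 1) + s} - (-1)^n F_{m - 5}^n G_{5(t + 1) + s}. \end{equation*}
   Context: A gibonacci sequence $(G_k)_{k\in\mathbb Z}$ is defined by arbitrary initial values $G_0=a$, $G_1=b$ (numbers, not both zero) and $G_k=G_{k-1}+G_{k-2}$ for all integers $k$. The Fibonacci numbers $F_k$ are the gibonacci sequence with $F_0=0$, $F_1=1$, extended to all integer indices by the same recurrence. The convention $0^0=1$ is used for powers. *)

From mathcomp Require Import all_boot all_order all_algebra.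
Set Implicit Arguments. Unset Strict Implicit. Unset Printing Implicit Defensive.
Import Order.TTheory GRing.Theory Num.Theory.
Local Open Scope ring_scope.

Fixpoint fibn (n : nat) : int :=
  match n with
  | 0 => 0
  | 1 => 1
  | (m.+1 as p).+1 => fibn p + fibn m
  end.

(* Extension to all integer indices by the same recurrence:
   F_{-n} = (-1)^(n+1) F_n. *)
Definition fib (k : int) : int :=
  match k with
  | Posz n => fibn n
  | Negz n => (-1) ^+ n * fibn n.+1  (* Negz n = -(n+1) *)
  end.

Definition gibonacci (R : nzRingType) (G : int -> R) : Prop :=
  (forall k : int, G k = G (k - 1) + G (k - 2)) /\ ~ (G 0 = 0 /\ G 1 = 0).

(* Both sides of F_p G_(k+m) = F_m G_(k+p) - (-1)^p F_(m-p) G_k satisfy the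
   Fibonacci recurrence in m and agree at m = 0 and m = 1, hence everywhere.
   For p = 5 this reads 5 G_(k+m) = F_m G_(k+5) + F_(m-5) G_k, which rewrites
   each summand as a difference of consecutive terms of
   (-F_(m-5))^(n-j) F_m^j G_(5(j+t+1)+s), so the sum telescopes. *)

From mathcomp Require Import all_boot all_order all_algebra.
From mathcomp Require Import zify ring.
Set Implicit Arguments. Unset Strict Implicit. Unset Printing Implicit Defensive.
Import Order.TTheory GRing.Theory Num.Theory.
Local Open Scope ring_scope.

Definition gibonacci_rec {V : zmodType} (f : int -> V) :=
  forall k : int, f (k + 2) = f (k + 1) + f k.

Section GibonacciRec.

Variable V : zmodType.
Implicit Types f g : int -> V.

Lemma gibonacci_recB f g :
  gibonacci_rec f -> gibonacci_rec g -> gibonacci_rec (fun k => f k - g k).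
Proof. by move=> hf hg k; rewrite hf hg opprD addrACA. Qed.

Lemma gibonacci_rec_eq0 f :
  gibonacci_rec f -> f 0 = 0 -> f 1 = 0 -> forall k, f k = 0.
Proof.
move=> hf f0 f1.
have fwd (n : nat) : f n = 0 /\ f n.+1 = 0.
  elim: n => [|n [fn fn1]] //; split=> //.
  have -> : n.+2%:Z = n%:Z + 2 by lia.
  by rewrite hf (_ : n%:Z + 1 = n.+1) ?fn1 ?fn ?addr0 //; lia.
have bwd (n : nat) : f (- n%:Z) = 0 /\ f (1 - n%:Z) = 0.
  elim: n => [|n [fn fn1]]; first by rewrite subr0.
  have := hf (- n.+1%:Z).
  have -> : - n.+1%:Z + 2 = 1 - n%:Z by lia.
  have -> : - n.+1%:Z + 1 = - n%:Z by lia.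
  by rewrite fn fn1 add0r => <-; rewrite (_ : 1 - n.+1%:Z = - n%:Z) //; lia.
by case=> n; [case: (fwd n) | rewrite NegzE; case: (bwd n.+1)].
Qed.

Lemma gibonacci_rec_uniq f g :
  gibonacci_rec f -> gibonacci_rec g -> f 0 = g 0 -> f 1 = g 1 -> f =1 g.
Proof.
move=> hf hg e0 e1 k; apply/eqP; rewrite -subr_eq0; apply/eqP; move: k.
by apply: (gibonacci_rec_eq0 (gibonacci_recB hf hg)); rewrite ?e0 ?e1 subrr.
Qed.

End GibonacciRec.

Lemma gibonacci_recW (R : nzRingType) (G : int -> R) :
  gibonacci G -> gibonacci_rec G.
Proof. by case=> hG _ k; rewrite hG; congr (G _ + G _); ring. Qed.

Lemma gibonacci_rec_fib : gibonacci_rec fib.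
Proof.
move=> [n|[|[|n]]] //.
  have -> : n%:Z + 2 = n.+2 by lia.
  by have -> : n%:Z + 1 = n.+1 by lia.
have -> : Negz n.+2 + 2 = Negz n by rewrite !NegzE; lia.
have -> : Negz n.+2 + 1 = Negz n.+1 by rewrite !NegzE; lia.
by rewrite /= !exprS; ring.
Qed.

Lemma fibN (n : nat) : fib (- n%:Z) = (-1) ^+ n.+1 * fib n.
Proof. by case: n => [|n] //=; rewrite !exprS !mulN1r opprK. Qed.

Lemma fib1B (n : nat) : fib (1 - n%:Z) = (-1) ^+ n * fib (n%:Z - 1).
Proof.
case: n => [|n] //; rewrite (_ : 1 - n.+1%:Z = - n%:Z) ?fibN; last by lia.
by rewrite (_ : n.+1%:Z - 1 = n) //; lia.
Qed.

Section GibonacciIdentities.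

Variables (R : comPzRingType) (G : int -> R).
Hypothesis hG : gibonacci_rec G.

Lemma gibonacciD (k m : int) :
  G (k + m) = (fib m)%:~R * G (k + 1) + (fib (m - 1))%:~R * G k.
Proof.
move: m; apply: gibonacci_rec_uniq.
- by move=> x /=; have := hG (k + x); rewrite -!addrA.
- move=> x /=; rewrite !(addrAC x _ (-1)) !gibonacci_rec_fib !intrD; ring.
- by rewrite addr0 mul0r add0r mul1r.
- by rewrite subrr mul1r mul0r addr0.
Qed.

Lemma fib_mul_gibonacci (p : nat) (k m : int) :
  (fib p)%:~R * G (k + m)
  = (fib m)%:~R * G (k + p%:Z) - (-1) ^+ p * (fib (m - p%:Z))%:~R * G k.
Proof.
have sign : (-1) ^+ p * (-1) ^+ p = 1 :> R by rewrite -exprMn mulrNN mulr1 expr1n.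
move: m; apply: gibonacci_rec_uniq.
- by move=> x /=; rewrite -mulrDr; have := hG (k + x); rewrite -!addrA => ->.
- move=> x /=; rewrite !(addrAC x _ (- p%:Z)) !gibonacci_rec_fib !intrD; ring.
- rewrite addr0 sub0r fibN mul0r sub0r intrM rmorphXn rmorphN1 exprS.
  transitivity ((-1) ^+ p * (-1) ^+ p * (fib p)%:~R * G k).
    by rewrite sign mul1r.
  ring.
- rewrite [fib 1]/= mul1r fib1B (gibonacciD k p) intrM rmorphXn rmorphN1.
  transitivity ((fib p)%:~R * G (k + 1) + (fib (p%:Z - 1))%:~R * G k
                - (-1) ^+ p * (-1) ^+ p * (fib (p%:Z - 1))%:~R * G k).
    by rewrite sign mul1r addrK.
  ring.
Qed.

End GibonacciIdentities.

Lemma telescope_sumr_geometric (R : comPzRingType) (a b : R) (u : nat -> R)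
    (n : nat) :
  \sum_(0 <= j < n) (- b) ^+ (n - j.+1) * a ^+ j * (a * u j.+1 + b * u j)
  = a ^+ n * u n - (- b) ^+ n * u 0%N.
Proof.
rewrite (telescope_sumr_eq (fun j => (- b) ^+ (n - j) * a ^+ j * u j)) //.
  by rewrite subnn subn0 !expr0 mul1r mulr1.
move=> j /andP [_ ltjn]; rewrite (_ : (n - j = (n - j.+1).+1)%N); last by lia.
by rewrite !exprS; ring.
Qed.

Theorem proposition3 (R : numFieldType) (G : int -> R) (hG : gibonacci G)
  (n : nat) (hn : (0 < n)%N) (m s t : int) :
  5 * \sum_(1 <= j < n.+1)
        (- (fib (m - 5))%:~R) ^+ (n - j) * (fib m)%:~R ^+ (j - 1)
        * G (5 * (j%:Z + t) + m + s)
  = (fib m)%:~R ^+ n * G (5 * (n%:Z + t + 1) + s)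
    - (-1) ^+ n * (fib (m - 5))%:~R ^+ n * G (5 * (t + 1) + s).
Proof.
set a : R := (fib m)%:~R; set b : R := (fib (m - 5))%:~R.
have five_mul_G (k : int) : 5 * G (k + m) = a * G (k + 5) + b * G k.
  have := fib_mul_gibonacci (gibonacci_recW hG) 5 k m.
  by rewrite [fib 5]/= => ->; ring.
pose u (j : nat) := G (5 * (j%:Z + t + 1) + s).
have five_mul_u (j : nat) : 5 * G (5 * (j.+1%:Z + t) + m + s) = a * u j.+1 + b * u j.
  by rewrite addrAC five_mul_G /u; congr (_ * G _ + _ * G _); lia.
rewrite big_distrr big_add1 /=.
under eq_bigr => j _ do rewrite subn1 /= mulrCA five_mul_u.
by rewrite telescope_sumr_geometric [(- b) ^+ n]exprNn /u add0r.
Qed.
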